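(* Let $M_{1/2} := \mathbb{N}_0[\frac12]$ and let $P(x)$ be a nonzero element of the monoid algebra $\mathbb{Q}[M_{1/2}]$. The following are equivalent: (a) $P(x)$ has only finitely many divisors in $\mathbb{Q}[M_{1/2}]$ up to associates; (b) $P(x)$ satisfies the ACCP, i.e., every ascending chain of principal ideals of $\mathbb{Q}[M_{1/2}]$ starting at $P(x)\mathbb{Q}[M_{1/2}]$ stabilizes; (c) $P(x)$ is atomic, i.e., it is a unit or a finite product of irreducible elements of $\mathbb{Q}[M_{1/2}]$.
   Context: $\mathbb{Q}[M_{1/2}]$ is the integral domain of polynomial expressions $\sum c_i x^{m_i}$ with $c_i \in \mathbb{Q}$ and $m_i$ nonnegative dyadic rationals. *)

(* Every element of Q[M_{1/2}] lies in some subring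
   Q[x^{1/2^n}] ~ Q[t] (t = x^{1/2^n}); Q[M_{1/2}] is the directed union of
   these polynomial rings along the embeddings t |-> t^2.
   An element is represented by a pair (n, p) with p : {poly rat}, standing
   for p(x^{1/2^n}).  Two representatives are equal in Q[M_{1/2}] iff they
   agree after being lifted to a common level ([qeq]).  All ring-theoretic
   notions below are invariant under [qeq]. *)
From HB Require Import structures.
From mathcomp Require Import all_boot all_order all_algebra.
Set Implicit Arguments. Unset Strict Implicit. Unset Printing Implicit Defensive.
Import Order.TTheory GRing.Theory Num.Theory.
Local Open Scope ring_scope.

Definition QM := (nat * {poly rat})%type.

(* embedding Q[x^{1/2^n}] -> Q[x^{1/2^(n+k)}]: t |-> t^(2^k) *)
Definition qlift (k : nat) (p : {poly rat}) : {poly rat} := p \Po 'X^(2 ^ k).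

(* the representative of a at level N (meaningful for N >= a.1) *)
Definition qat (N : nat) (a : QM) : {poly rat} := qlift (N - a.1) a.2.

Definition qeq (a b : QM) : Prop :=
  qat (maxn a.1 b.1) a = qat (maxn a.1 b.1) b.

Definition qmul (a b : QM) : QM :=
  (maxn a.1 b.1, qat (maxn a.1 b.1) a * qat (maxn a.1 b.1) b).

Definition qone : QM := (0%N, 1).

Definition qzero (a : QM) : Prop := a.2 = 0.

Definition qunit (a : QM) : Prop := exists b : QM, qeq (qmul a b) qone.

Definition qdvd (a b : QM) : Prop := exists c : QM, qeq (qmul a c) b.

Definition qassoc (a b : QM) : Prop :=
  exists u : QM, qunit u /\ qeq b (qmul u a).

Definition qirreducible (a : QM) : Prop :=
  ~ qzero a /\ ~ qunit a /\
  forall b c : QM, qeq a (qmul b c) -> qunit b \/ qunit c.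

Definition qprod (s : seq QM) : QM := foldr qmul qone s.

Definition fin_divisors (P : QM) : Prop :=
  exists s : seq QM, forall d : QM, qdvd d P -> exists2 e, e \in s & qassoc d e.

Definition accp_at (P : QM) : Prop :=
  forall f : nat -> QM, qeq (f 0%N) P -> (forall n, qdvd (f n.+1) (f n)) ->
  exists N : nat, forall n, (N <= n)%N -> qdvd (f N) (f n) /\ qdvd (f n) (f N).

Definition atomic_elt (P : QM) : Prop :=
  qunit P \/ exists s : seq QM, s <> [::] /\ (forall a, a \in s -> qirreducible a)
                              /\ qeq P (qprod s).

(* Q[M_{1/2}] is the directed union of the polynomial rings Q[x^(1/2^n)], so
   any two elements have a gcd computed in one common Q[t]; consequently every
   irreducible element is prime.  In a cancellative commutative monoid whose
   irreducibles are prime, the divisors of an atomic element are, up to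
   associates, among the finitely many subproducts of its factorization.
   Finitely many divisors give ACCP: the number of listed divisors that divide
   the n-th term of a chain is nonincreasing, hence eventually constant.  ACCP
   gives atomicity: a nonzero non-atomic element has a non-atomic proper
   divisor, and iterating this produces a strictly ascending chain. *)

From Stdlib Require Import Setoid Morphisms.
From mathcomp Require Import all_boot all_order all_algebra.
From mathcomp Require Import zify boolp.
Set Implicit Arguments. Unset Strict Implicit. Unset Printing Implicit Defensive.
Import GRing.Theory.

Lemma nonincreasing_eventually_constant (g : nat -> nat) :
  {homo g : m n / (m <= n)%N >-> (n <= m)%N} ->
  exists N, forall n, (N <= n)%N -> g n = g N.
Proof.
move=> g_dec.
have ex_val : exists v, `[< exists n, g n = v >].
  by exists (g 0%N); apply/asboolP; exists 0%N.
case: (ex_minnP ex_val) => _ /asboolP [N <-] g_min.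
exists N => n Nn; apply/eqP; rewrite eqn_leq g_dec // g_min //.
by apply/asboolP; exists n.
Qed.

Lemma eq_count_subpred (T : eqType) (a b : pred T) (s : seq T) :
  subpred b a -> count b s = count a s -> {in s, subpred a b}.
Proof.
move=> ba; rewrite -[count a s]size_filter -(count_predC b) !count_filter.
rewrite (@eq_count _ _ b) => [|x /=]; last first.
  by apply/andP/idP => [[]//|bx]; split=> //; apply: ba.
move=> /eqP; rewrite -[X in X == _]addn0 eqn_add2l eq_sym -leqn0 leqNgt -has_count.
move=> /hasPn nba x xs ax; apply: contraNT (nba x xs) => nbx; exact/andP.
Qed.

Section FactorizationInCancellativeMonoids.

Variables (T : eqType) (eqv : T -> T -> Prop) (mul : T -> T -> T) (one : T).
Variable is_zero : T -> Prop.

Local Infix "≡" := eqv (at level 70, no associativity).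
Local Infix "⋅" := mul (at level 40, left associativity).

Hypothesis eqv_equiv : Equivalence eqv.
Hypothesis mul_proper : Proper (eqv ==> eqv ==> eqv) mul.
Hypothesis is_zero_proper : Proper (eqv ==> iff) is_zero.
Hypothesis mulmC : forall a b, a ⋅ b ≡ b ⋅ a.
Hypothesis mulmA : forall a b c, a ⋅ (b ⋅ c) ≡ a ⋅ b ⋅ c.
Hypothesis mul1m : forall a, one ⋅ a ≡ a.
Hypothesis is_zero_mull : forall a b, is_zero a -> is_zero (a ⋅ b).
Hypothesis mulmI : forall a b c, ~ is_zero a -> a ⋅ b ≡ a ⋅ c -> b ≡ c.

#[local] Existing Instances eqv_equiv mul_proper is_zero_proper.
#[local] Hint Extern 0 (_ ≡ _) => reflexivity : core.

Definition divides a b := exists c, a ⋅ c ≡ b.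
Definition is_unit a := exists b, a ⋅ b ≡ one.
Definition associates a b := exists u, is_unit u /\ b ≡ u ⋅ a.
Definition irreducible a :=
  ~ is_zero a /\ ~ is_unit a /\ forall b c, a ≡ b ⋅ c -> is_unit b \/ is_unit c.
Definition product (s : seq T) := foldr mul one s.

Definition finitely_many_divisors P :=
  exists s : seq T, forall d, divides d P -> exists2 e, e \in s & associates d e.
Definition accp P :=
  forall f : nat -> T, f 0%N ≡ P -> (forall n, divides (f n.+1) (f n)) ->
  exists N, forall n, (N <= n)%N -> divides (f N) (f n) /\ divides (f n) (f N).
Definition atomic P :=
  is_unit P \/ exists s, s <> [::] /\ (forall a, a \in s -> irreducible a)
                         /\ P ≡ product s.

Lemma mulm1 a : a ⋅ one ≡ a.
Proof. by rewrite mulmC mul1m. Qed.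

Lemma mulmCA a b c : a ⋅ (b ⋅ c) ≡ b ⋅ (a ⋅ c).
Proof. by rewrite !mulmA (mulmC a b). Qed.

#[local] Instance divides_proper : Proper (eqv ==> eqv ==> iff) divides.
Proof.
move=> a a' aa' b b' bb'; split=> -[c ac]; exists c.
  by rewrite -aa' -bb'.
by rewrite aa' bb'.
Qed.

#[local] Instance is_unit_proper : Proper (eqv ==> iff) is_unit.
Proof. by move=> a a' aa'; split=> -[b ab]; exists b; rewrite ?aa' // -aa'. Qed.

Lemma atomic_eqv a a' : a ≡ a' -> atomic a -> atomic a'.
Proof.
move=> aa' [au | [s [s0 [s_irr a_s]]]]; first by left; rewrite -aa'.
by right; exists s; rewrite -aa'.
Qed.

Lemma divides_refl a : divides a a.
Proof. by exists one; rewrite mulm1. Qed.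

Lemma divides_trans a b c : divides a b -> divides b c -> divides a c.
Proof. by move=> [k ak] [l bl]; exists (k ⋅ l); rewrite mulmA ak. Qed.

Lemma associates_divides d e : associates d e -> divides d e /\ divides e d.
Proof.
move=> [u [[w uw] eu]]; split; first by exists u; rewrite eu mulmC.
by exists w; rewrite eu mulmC mulmA (mulmC w) uw mul1m.
Qed.

Lemma product_cat s1 s2 : product (s1 ++ s2) ≡ product s1 ⋅ product s2.
Proof. by elim: s1 => [|a s1 IH] /=; rewrite ?mul1m // IH mulmA. Qed.

Lemma irreducible_atomic a : irreducible a -> atomic a.
Proof.
move=> a_irr; right; exists [:: a]; do 2!split => //=.
  by move=> b; rewrite inE => /eqP ->.
by rewrite mulm1.
Qed.

Lemma atomic_mul b c :
  ~ is_unit b -> ~ is_unit c -> atomic b -> atomic c -> atomic (b ⋅ c).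
Proof.
move=> b_nu c_nu [//|[s1 [s1_nil [s1_irr b_s1]]]] [//|[s2 [_ [s2_irr c_s2]]]].
right; exists (s1 ++ s2); split; first by case: s1 {s1_irr b_s1} s1_nil.
split; last by rewrite product_cat b_s1 c_s2.
by move=> a; rewrite mem_cat => /orP [/s1_irr | /s2_irr].
Qed.

Lemma finitely_many_divisors_accp P : finitely_many_divisors P -> accp P.
Proof.
move=> [s s_divs] f f0P f_chain.
have f_dec m n : (m <= n)%N -> divides (f n) (f m).
  move/subnK <-; elim: (n - m)%N => [|k IH]; first exact: divides_refl.
  exact: divides_trans (f_chain _) IH.
pose g n := count (fun e => `[< divides e (f n) >]) s.
have [N gN] : exists N, forall n, (N <= n)%N -> g n = g N.
  apply: nonincreasing_eventually_constant => m n mn; apply: sub_count => e /asboolP em.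
  by apply/asboolP; apply: divides_trans em (f_dec m n mn).
exists N => n Nn; split; last exact: f_dec.
have [e es /associates_divides [fN_e e_fN]] : exists2 e, e \in s & associates (f N) e.
  by apply: s_divs; rewrite -f0P; apply: f_dec.
have /asboolP e_fn : `[< divides e (f n) >].
  apply: (eq_count_subpred _ (gN n Nn)) es _; last exact/asboolP.
  by move=> d /asboolP dfn; apply/asboolP; apply: divides_trans dfn (f_dec N n Nn).
exact: divides_trans fN_e e_fn.
Qed.

Lemma proper_factor_not_dividing x y z :
  ~ is_zero x -> x ≡ y ⋅ z -> ~ is_unit z -> ~ divides x y.
Proof.
move=> x0 xyz z_nu [k xk]; apply: z_nu; exists k; apply: (mulmI x0).
by rewrite mulmCA xk (mulmC z y) -xyz mulm1.
Qed.

Lemma not_atomic_proper_divisor x : ~ is_zero x -> ~ atomic x ->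
  exists y, (~ is_zero y /\ ~ atomic y) /\ divides y x /\ ~ divides x y.
Proof.
move=> x0 x_na.
have [b [c [xbc [b_nu c_nu]]]] : exists b c, x ≡ b ⋅ c /\ ~ is_unit b /\ ~ is_unit c.
  apply: contrapT => no_split; apply/x_na/irreducible_atomic.
  split=> //; split=> [x_unit|b c xbc]; first by apply: x_na; left.
  by apply: contrapT => /not_orP [b_nu c_nu]; apply: no_split; exists b, c.
have xcb : x ≡ c ⋅ b by rewrite mulmC.
have [b_at | b_na] := pselect (atomic b); last first.
  exists b; split.
    by split=> // b0; apply: x0; rewrite xbc; apply: is_zero_mull.
  by split; [exists c; symmetry | apply: proper_factor_not_dividing xbc _].
have [c_at | c_na] := pselect (atomic c).
  by case: x_na; apply: atomic_eqv (symmetry xbc) (atomic_mul b_nu c_nu b_at c_at).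
exists c; split.
  by split=> // c0; apply: x0; rewrite xcb; apply: is_zero_mull.
by split; [exists b; symmetry | apply: proper_factor_not_dividing xcb _].
Qed.

Lemma accp_atomic P : ~ is_zero P -> accp P -> atomic P.
Proof.
move=> P0 P_accp; apply: contrapT => P_na.
pose bad x := ~ is_zero x /\ ~ atomic x.
have step x : exists y, bad x -> bad y /\ divides y x /\ ~ divides x y.
  have [[x0 x_na] | x_good] := pselect (bad x); last by exists x => /x_good.
  by have [y y_step] := not_atomic_proper_divisor x0 x_na; exists y.
have [F F_step] := choice step.
pose f n := iter n F P.
have f_bad n : bad (f n).
  by elim: n => [|n IH]; [split | exact: (F_step _ IH).1].
have [N /(_ N.+1 (leqnSn N)) [fN_dvd _]] :=
  P_accp f (reflexivity P) (fun n => (F_step _ (f_bad n)).2.1).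
exact: (F_step _ (f_bad N)).2.2 fN_dvd.
Qed.

Hypothesis irreducible_prime : forall a b c,
  irreducible a -> divides a (b ⋅ c) -> divides a b \/ divides a c.

Fixpoint subproducts (s : seq T) : seq T :=
  if s is a :: s' then subproducts s' ++ map (mul a) (subproducts s') else [:: one].

Lemma divides_product_associates s d : (forall a, a \in s -> irreducible a) ->
  divides d (product s) -> exists2 e, e \in subproducts s & associates d e.
Proof.
elim: s d => [|a s IH] d s_irr [k dk] /=.
  exists one; first exact: mem_head.
  by exists k; split; [exists d |]; rewrite mulmC dk.
have a_irr : irreducible a by apply: s_irr; exact: mem_head.
have s_irr' b : b \in s -> irreducible b by move=> bs; apply: s_irr; rewrite inE bs orbT.
have a_dk : divides a (d ⋅ k) by exists (product s); rewrite dk.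
have [[d' ad'] | [k' ak']] := irreducible_prime a_irr a_dk.
  have [|e es [u [u_unit eu]]] := IH d' s_irr'.
    by exists k; apply: (mulmI a_irr.1); rewrite mulmA ad' dk.
  exists (a ⋅ e); first by rewrite mem_cat map_f ?orbT.
  by exists u; split; rewrite // eu mulmCA ad'.
have [|e es de] := IH d s_irr'; last by exists e; rewrite // mem_cat es.
by exists k'; apply: (mulmI a_irr.1); rewrite mulmCA ak' dk.
Qed.

Lemma atomic_finitely_many_divisors P : atomic P -> finitely_many_divisors P.
Proof.
case=> [[w Pw] | [s [_ [s_irr Ps]]]]; last first.
  by exists (subproducts s) => d; rewrite Ps; apply: divides_product_associates.
exists (subproducts [::]) => d dP; apply: divides_product_associates => //.
by apply: divides_trans dP _; exists w.
Qed.

Theorem finitely_many_divisors_accp_atomic P : ~ is_zero P ->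
  (finitely_many_divisors P <-> accp P) /\ (accp P <-> atomic P).
Proof.
move=> P0; have := @accp_atomic P P0.
have := @finitely_many_divisors_accp P; have := @atomic_finitely_many_divisors P.
tauto.
Qed.

End FactorizationInCancellativeMonoids.

Local Open Scope ring_scope.

Lemma qlift0 p : qlift 0 p = p.
Proof. by rewrite /qlift expn0 expr1 comp_polyXr. Qed.

Lemma qliftD j k p : qlift j (qlift k p) = qlift (k + j) p.
Proof. by rewrite /qlift -comp_polyA comp_Xn_poly -exprM expnD mulnC. Qed.

Lemma qliftM k p q : qlift k (p * q) = qlift k p * qlift k q.
Proof. exact: comp_polyM. Qed.

Lemma qliftC k c : qlift k c%:P = c%:P.
Proof. exact: comp_polyC. Qed.

Lemma qlift_inj k : injective (qlift k).
Proof.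
have coef_qlift p i : (qlift k p)`_(i * 2 ^ k) = p`_i.
  by rewrite coef_comp_poly_Xn ?expn_gt0 // dvdn_mull // mulnK ?expn_gt0.
by move=> p q pq; apply/polyP => i; rewrite -coef_qlift pq coef_qlift.
Qed.

Lemma qat_lift N M a : (a.1 <= N)%N -> (N <= M)%N -> qat M a = qlift (M - N) (qat N a).
Proof. by move=> aN NM; rewrite /qat qliftD; congr qlift; lia. Qed.

Lemma qeq_at N a b : (a.1 <= N)%N -> (b.1 <= N)%N -> qeq a b <-> qat N a = qat N b.
Proof.
move=> aN bN; have abN : (maxn a.1 b.1 <= N)%N by rewrite geq_max aN.
rewrite /qeq (qat_lift (a := a) _ abN) ?(qat_lift (a := b) _ abN) ?leq_maxl ?leq_maxr //.
by split=> [-> | /qlift_inj].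
Qed.

Lemma qat_mul N a b : (a.1 <= N)%N -> (b.1 <= N)%N ->
  qat N (qmul a b) = qat N a * qat N b.
Proof.
move=> aN bN; have abN : (maxn a.1 b.1 <= N)%N by rewrite geq_max aN.
by rewrite {1}/qat qliftM -!(qat_lift _ abN) ?leq_maxl ?leq_maxr.
Qed.

Lemma qat_one N : qat N qone = 1.
Proof. by rewrite /qat qliftC. Qed.

Lemma qat_pair N p : qat N (N, p) = p.
Proof. by rewrite /qat subnn qlift0. Qed.

Lemma qzero_at N a : qzero a <-> qat N a = 0.
Proof.
rewrite /qzero /qat; split=> [-> | a0]; first by rewrite -polyC0 qliftC.
by apply: (@qlift_inj (N - a.1)); rewrite a0 -polyC0 qliftC.
Qed.

(* Rewrites every [qeq] and [qmul] in sight at the common level [N], leaving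
   identities between polynomials. *)
Ltac at_level N :=
  repeat match goal with
  | H : qeq ?a ?b |- _ => move: H; rewrite (@qeq_at N a b) /=; [move=> H | lia | lia]
  end;
  try match goal with |- qeq ?a ?b => rewrite (@qeq_at N a b) /=; [ | lia | lia] end;
  repeat match goal with
  | H : context [qat N (qmul ?a ?b)] |- _ =>
      rewrite (@qat_mul N a b) /= in H; [ | lia | lia]
  | |- context [qat N (qmul ?a ?b)] => rewrite (@qat_mul N a b) /=; [ | lia | lia]
  | H : context [qat N qone] |- _ => rewrite qat_one in H
  | |- context [qat N qone] => rewrite qat_one
  | H : context [qat N (N, ?p)] |- _ => rewrite qat_pair in H
  | |- context [qat N (N, ?p)] => rewrite qat_pair
  end.

Lemma qeq_equiv : Equivalence qeq.
Proof.
split=> [a | a b | a b c]; first by [].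
  by rewrite /qeq maxnC => ->.
by move=> ab bc; at_level (maxn a.1 (maxn b.1 c.1)); rewrite ab bc.
Qed.

Lemma qmul_proper : Proper (qeq ==> qeq ==> qeq) qmul.
Proof.
move=> a a' aa' b b' bb'; at_level (maxn (maxn a.1 a'.1) (maxn b.1 b'.1)).
by rewrite aa' bb'.
Qed.

Lemma qzero_proper : Proper (qeq ==> iff) qzero.
Proof.
move=> a b ab; at_level (maxn a.1 b.1).
by rewrite !(qzero_at (maxn a.1 b.1)) ab.
Qed.

Lemma qmulC a b : qeq (qmul a b) (qmul b a).
Proof. by at_level (maxn a.1 b.1); rewrite mulrC. Qed.

Lemma qmulA a b c : qeq (qmul a (qmul b c)) (qmul (qmul a b) c).
Proof. by at_level (maxn a.1 (maxn b.1 c.1)); rewrite mulrA. Qed.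

Lemma qmul1 a : qeq (qmul qone a) a.
Proof. by at_level a.1; rewrite mul1r. Qed.

Lemma qzero_mull a b : qzero a -> qzero (qmul a b).
Proof.
rewrite !(qzero_at (maxn a.1 b.1)) qat_mul ?leq_maxl ?leq_maxr // => ->.
by rewrite mul0r.
Qed.

Lemma qmulI a b c : ~ qzero a -> qeq (qmul a b) (qmul a c) -> qeq b c.
Proof.
rewrite (qzero_at (maxn a.1 (maxn b.1 c.1))) => /eqP a0 abc.
by at_level (maxn a.1 (maxn b.1 c.1)); apply: mulfI abc.
Qed.

Lemma qunit_const a : qunit a -> exists2 c, c != 0 & a.2 = c%:P.
Proof.
case=> w aw; at_level (maxn a.1 w.1).
have /size_poly1P [c c0 ac] : size (qat (maxn a.1 w.1) a) == 1%N.
  have : qat (maxn a.1 w.1) a \is a GRing.unit.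
    by apply/unitrPr; exists (qat (maxn a.1 w.1) w).
  by rewrite poly_unitE => /andP [].
by exists c => //; apply: (@qlift_inj (maxn a.1 w.1 - a.1)); rewrite qliftC.
Qed.

Lemma qdvd_of_dvdp N a b : (a.1 <= N)%N -> (b.1 <= N)%N ->
  qat N a %| qat N b -> qdvd a b.
Proof.
move=> aN bN /dvdpP [q bqa]; exists (N, q).
by rewrite (@qeq_at N) ?qat_mul ?qat_pair ?bqa 1?mulrC //= geq_max aN leqnn.
Qed.

Lemma qirreducible_prime a b c :
  qirreducible a -> qdvd a (qmul b c) -> qdvd a b \/ qdvd a c.
Proof.
move=> [_ [_ a_irr]] [k ak].
pose N := maxn (maxn a.1 b.1) (maxn c.1 k.1).
have ABC : qat N a %| qat N b * qat N c.
  by at_level N; apply/dvdpP; exists (qat N k); rewrite -ak mulrC.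
set A := qat N a in ABC *; set B := qat N b in ABC *.
(* With [G] the gcd of [A] and [B], irreducibility of [a = (A %/ G) * G]
   forces one of the two factors to be a nonzero constant. *)
set G := gcdp A B.
have : qeq a (qmul (N, A %/ G) (N, G)) by at_level N; rewrite divpK ?dvdp_gcdl.
case/a_irr => /qunit_const [u u0 /= uE].
  left; apply: (@qdvd_of_dvdp N); rewrite ?leq_max ?leqnn ?orbT //.
  by rewrite -/A -/B -(divpK (dvdp_gcdl A B)) -/G uE mul_polyC dvdpZl // dvdp_gcdr.
right; apply: (@qdvd_of_dvdp N); rewrite ?leq_max ?leqnn ?orbT //.
have AB : coprimep A B by rewrite /coprimep -/G uE size_polyC u0.
by rewrite -(Gauss_dvdpr _ AB).
Qed.

Theorem corollary4p3 (P : QM) :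
  ~ qzero P ->
  (fin_divisors P <-> accp_at P) /\ (accp_at P <-> atomic_elt P).
Proof.
exact: (finitely_many_divisors_accp_atomic qeq_equiv qmul_proper qzero_proper
          qmulC qmulA qmul1 qzero_mull qmulI qirreducible_prime).
Qed.
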